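(* Let $K\ge 1$ and let $\mathcal A_\theta$ be an $L$-layer MinAgg GNN. If $h^{(L)}_{v_K}(H^{(0)}_K)\ne h^{(L)}_{u_K}(H^{(0)}_K)$, then $\mathcal A_\theta$ has at least $K$ edge-dependent message passing layers.
   Context: Attributed graphs: $G=(V,E,X_{\mathrm v},X_{\mathrm e})$ with $V$ finite, undirected edges, nonnegative edge weights and nonnegative node features; every node has a self-loop of weight $x_{(v,v)}=0$ and $\mathcal N(v)=\{v\}\cup\{u:\{u,v\}\in E\}$. A large constant $\beta>0$ encodes ''infinite distance''. The graph $H^{(0)}_K$: vertices $v_0,\dots,v_K,u_0,\dots,u_K$; edges $\{v_{i-1},v_i\}$, $\{u_{i-1},u_i\}$, $\{u_{i-1},v_i\}$, $\{v_{i-1},u_i\}$ for $i\in[K]$; weights $1$ on the edges $\{u_{i-1},v_i\}$ and $\{v_{i-1},u_i\}$ and $0$ on the edges $\{v_{i-1},v_i\}$, $\{u_{i-1},u_i\}$; node features $x_{v_0}=0$ and $x_w=\beta$ for all other $w$. An $m$-layer ReLU MLP computes $x^{(0)}=x$, $x^{(j)}=\sigma(W_jx^{(j-1)}+b_j)$ ($j\in[m]$), output $x^{(m)}$, $\sigma$ componentwise ReLU. MinAgg GNN: for each $\ell\in[L]$, ReLU MLPs $f^{\mathrm{agg},(\ell)}:\mathbb R^{d_{\ell-1}+1}\to\mathbb R^d$ and $f^{\mathrm{up},(\ell)}:\mathbb R^{d+d_{\ell-1}}\to\mathbb R^{d_\ell}$, $d_0=d_L=1$, $d_\ell=d$ otherwise;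 $h^{(0)}_v=x_v$ and $h^{(\ell)}_v=f^{\mathrm{up},(\ell)}\big(\min_{u\in\mathcal N(v)}f^{\mathrm{agg},(\ell)}(h^{(\ell-1)}_u\oplus x_{(u,v)})\oplus h^{(\ell-1)}_v\big)$ (coordinatewise min, $\oplus$ concatenation). The first $d_{\ell-1}$ input coordinates of $f^{\mathrm{agg},(\ell)}$ are its node component, the last its edge component. A function $f$ on $\mathbb R^n_{\ge0}$ depends on a set $S$ of coordinates if there are $x\ne y$ in $\mathbb R^n_{\ge 0}$ agreeing outside $S$ with $f(x)\neq f(y)$. Layer $\ell$ is message passing if $f^{\mathrm{agg},(\ell)}$ depends on its node component, and edge-dependent message passing if moreover $f^{\mathrm{agg},(\ell)}$ depends on its edge component. *)

From HB Require Import structures.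
From mathcomp Require Import all_boot all_order all_algebra.
From mathcomp Require Import reals.
Set Implicit Arguments.
Unset Strict Implicit.
Unset Printing Implicit Defensive.
Import Order.TTheory GRing.Theory Num.Theory.
Local Open Scope ring_scope.

Section Defs.
Variable R : realType.

Definition relu n (x : 'cV[R]_n) : 'cV[R]_n := \col_i Num.max (x i 0) 0.

Inductive mlp : nat -> nat -> Type :=
| MLP1 n m of 'M[R]_(m, n) & 'cV[R]_m : mlp n m
| MLPS n k m of 'M[R]_(k, n) & 'cV[R]_k & mlp k m : mlp n m.

Fixpoint mlp_eval n m (f : mlp n m) : 'cV[R]_n -> 'cV[R]_m :=
  match f in mlp n m return 'cV[R]_n -> 'cV[R]_m with
  | MLP1 _ _ W b => fun x => relu (W *m x + b)
  | MLPS _ _ _ W b g => fun x => mlp_eval g (relu (W *m x + b))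
  end.

Definition nonneg_vec n (x : 'cV[R]_n) : Prop := forall i, 0 <= x i 0.

Definition depends_on n m (f : 'cV[R]_n -> 'cV[R]_m) (S : {set 'I_n}) : Prop :=
  exists x y : 'cV[R]_n,
    [/\ nonneg_vec x, nonneg_vec y, x != y,
        (forall i, i \notin S -> x i 0 = y i 0) & f x != f y].

Definition node_comp n : {set 'I_(n + 1)} := [set lshift 1 i | i : 'I_n].
Definition edge_comp n : {set 'I_(n + 1)} := [set rshift n i | i : 'I_1].

Definition dimf (L d l : nat) : nat := if (l == 0%N) || (l == L) then 1%N else d.

(* An L-layer MinAgg GNN. Layer l+1 of the paper (l = 0, ..., L-1) is given by
   agg l : R^(d_l + 1) -> R^d and up l : R^(d + d_l) -> R^(d_(l+1)).
   (Entries at indices l >= L are never used.) *)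
Record MinAggGNN := {
  gnn_L : nat;
  gnn_d : nat;
  gnn_agg : forall l : nat, mlp (dimf gnn_L gnn_d l + 1) gnn_d;
  gnn_up : forall l : nat, mlp (gnn_d + dimf gnn_L gnn_d l) (dimf gnn_L gnn_d l.+1)
}.

(* layer with 1-based index l.+1 is (edge-dependent) message passing *)
Definition message_passing (A : MinAggGNN) (l : nat) : Prop :=
  depends_on (mlp_eval (gnn_agg A l)) (node_comp _).
Definition edge_dep_message_passing (A : MinAggGNN) (l : nat) : Prop :=
  message_passing A l /\ depends_on (mlp_eval (gnn_agg A l)) (edge_comp _).

Section Eval.
Variables (A : MinAggGNN) (V : finType) (adj : rel V)
          (ew : V -> V -> R) (x : V -> R).
Local Notation L := (gnn_L A).
Local Notation d := (gnn_d A).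

Definition nbhd (v : V) : {set V} := [set u | (u == v) || adj u v].

(* coordinatewise minimum of g over N(v) (N(v) is nonempty, contains v) *)
Definition cmin n (g : V -> 'cV[R]_n) (v : V) : 'cV[R]_n :=
  \col_i \big[Num.min/ g v i 0]_(u in nbhd v) g u i 0.

Definition gnn_layer (l : nat) (h : V -> 'cV[R]_(dimf L d l)) :
    V -> 'cV[R]_(dimf L d l.+1) :=
  fun v => mlp_eval (gnn_up A l)
     (col_mx (cmin (fun u => mlp_eval (gnn_agg A l) (col_mx (h u) (ew u v)%:M)) v)
             (h v)).

Fixpoint gnn_rep (l : nat) : V -> 'cV[R]_(dimf L d l) :=
  match l with
  | 0 => fun v => (x v)%:M
  | l'.+1 => gnn_layer (gnn_rep l')
  end.
End Eval.

(* The graph H^(0)_K: (false, i) = v_i, (true, i) = u_i. *)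
Definition HV (K : nat) : finType := (bool * 'I_K.+1)%type.
Definition Hadj (K : nat) : rel (HV K) :=
  fun a b => (val a.2 == (val b.2).+1) || (val b.2 == (val a.2).+1).
(* weight 1 on {u_(i-1), v_i}, {v_(i-1), u_i}; 0 on {v_(i-1),v_i}, {u_(i-1),u_i};
   0 on self-loops *)
Definition Hew (K : nat) : HV K -> HV K -> R :=
  fun a b => if a.1 == b.1 then 0 else 1.
Definition Hx (K : nat) (beta : R) : HV K -> R :=
  fun a => if (a.1 == false) && (val a.2 == 0%N) then 0 else beta.
Definition Hv (K : nat) (i : 'I_K.+1) : HV K := (false, i).
Definition Hu (K : nat) (i : 'I_K.+1) : HV K := (true, i).

End Defs.

From HB Require Import structures.
From mathcomp Require Import all_boot all_order all_algebra.
From mathcomp Require Import reals.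
From mathcomp Require Import zify.
From Stdlib Require Import Classical.
Import Order.TTheory GRing.Theory Num.Theory.
Local Open Scope ring_scope.
Set Implicit Arguments. Unset Strict Implicit. Unset Printing Implicit Defensive.

(** Swapping v_j with u_j preserves the edges and weights of H^(0)_K; the
    features differ only at v_0.  Hence after l layers v_j and u_j carry equal
    embeddings for every j beyond the number e of edge-dependent message
    passing layers among the first l.  At layer l+1 and j > e: if j > e+1, all
    neighbours of v_j and u_j lie beyond e and the swap matches their messages;
    if the layer ignores node features, messages depend only on edge weights,
    which the swap preserves; if it ignores edge weights, v_j and u_j have the
    same neighbours apart from themselves, and their own embeddings agree.
    Only the first case covers an edge-dependent layer, which is why such a
    layer advances e by one. *)

Section GenericFacts.
Variable R : realType.

Lemma cmin_le_of_cover (V : finType) (adj1 adj2 : rel V) n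
    (g1 g2 : V -> 'cV[R]_n) v1 v2 i :
  (forall u, u \in nbhd adj2 v2 -> exists2 u', u' \in nbhd adj1 v1 & g1 u' = g2 u) ->
  cmin adj1 g1 v1 i 0 <= cmin adj2 g2 v2 i 0.
Proof.
move=> cover; rewrite !mxE.
have le_g2 u : u \in nbhd adj2 v2 ->
    \big[Num.min/g1 v1 i 0]_(w in nbhd adj1 v1) g1 w i 0 <= g2 u i 0.
  by case/cover=> u' u'_in <-; exact: bigmin_le_cond.
by apply: le_bigmin => [|u /le_g2 //]; apply: le_g2; rewrite inE eqxx.
Qed.

Lemma cmin_eq_of_cover (V : finType) (adj1 adj2 : rel V) n
    (g1 g2 : V -> 'cV[R]_n) v1 v2 :
  (forall u, u \in nbhd adj2 v2 -> exists2 u', u' \in nbhd adj1 v1 & g1 u' = g2 u) ->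
  (forall u, u \in nbhd adj1 v1 -> exists2 u', u' \in nbhd adj2 v2 & g2 u' = g1 u) ->
  cmin adj1 g1 v1 = cmin adj2 g2 v2.
Proof.
move=> cover12 cover21; apply/matrixP => i j; rewrite (ord1 j).
by apply: le_anti; rewrite !cmin_le_of_cover.
Qed.

Lemma mlp_eval_nonneg n m (f : mlp R n m) x : nonneg_vec (mlp_eval f x).
Proof.
elim: f x => [n' m' W b|n' k m' W b g IH] x /=; last exact: IH.
by move=> i; rewrite mxE le_max lexx orbT.
Qed.

Lemma scalar_cV_nonneg (a : R) : 0 <= a -> nonneg_vec (a%:M : 'cV[R]_1).
Proof. by move=> a_ge0 i; rewrite mxE (ord1 i) eqxx mulr1n. Qed.

Lemma col_mx_nonneg n (a : 'cV[R]_n) (w : 'cV[R]_1) :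
  nonneg_vec a -> nonneg_vec w -> nonneg_vec (col_mx a w).
Proof.
move=> a_ge0 w_ge0 i; rewrite -[i]splitK.
by case: (split i) => j /=; rewrite ?col_mxEu ?col_mxEd.
Qed.

Lemma eq_of_not_depends_on n m (f : 'cV[R]_n -> 'cV[R]_m) S x y :
  ~ depends_on f S -> nonneg_vec x -> nonneg_vec y ->
  (forall i, i \notin S -> x i 0 = y i 0) -> f x = f y.
Proof.
move=> indep x_ge0 y_ge0 eq_out; case: (eqVneq x y) => [->//|x_neq_y].
case: (eqVneq (f x) (f y)) => [//|fx_neq_fy].
by case: indep; exists x, y; split.
Qed.

Lemma eq_of_node_indep n m (f : 'cV[R]_(n + 1) -> 'cV[R]_m) a b w :
  ~ depends_on f (node_comp n) -> nonneg_vec a -> nonneg_vec b ->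
  nonneg_vec w -> f (col_mx a w) = f (col_mx b w).
Proof.
move=> indep a_ge0 b_ge0 w_ge0.
apply: (eq_of_not_depends_on indep); try exact: col_mx_nonneg.
move=> i; rewrite -[i]splitK; case: (split i) => j /= i_out.
  by case/negP: i_out; apply/imsetP; exists j.
by rewrite !col_mxEd.
Qed.

Lemma eq_of_edge_indep n m (f : 'cV[R]_(n + 1) -> 'cV[R]_m) a w1 w2 :
  ~ depends_on f (edge_comp n) -> nonneg_vec a -> nonneg_vec w1 ->
  nonneg_vec w2 -> f (col_mx a w1) = f (col_mx a w2).
Proof.
move=> indep a_ge0 w1_ge0 w2_ge0.
apply: (eq_of_not_depends_on indep); try exact: col_mx_nonneg.
move=> i; rewrite -[i]splitK; case: (split i) => j /= i_out.
  by rewrite !col_mxEu.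
by case/negP: i_out; apply/imsetP; exists j.
Qed.

End GenericFacts.

Section SwapSymmetry.
Variable K : nat.

Definition Hswap (a : HV K) : HV K := (~~ a.1, a.2).

Lemma HswapK : involutive Hswap.
Proof. by case=> b i; rewrite /Hswap negbK. Qed.

Lemma Hnbhd_swap w v :
  (Hswap w \in nbhd (@Hadj K) (Hswap v)) = (w \in nbhd (@Hadj K) v).
Proof.
by case: w v => [b i] [c j]; rewrite !inE /Hswap !xpair_eqE; case: b; case: c.
Qed.

Lemma Hnbhd_swapr w v :
  w \in nbhd (@Hadj K) v -> w != v -> w \in nbhd (@Hadj K) (Hswap v).
Proof.
by rewrite !inE => /orP[/eqP->|adj_wv _]; [rewrite eqxx | apply/orP; right].
Qed.

Lemma Hnbhd_index w v : w \in nbhd (@Hadj K) v -> (v.2 <= (w.2).+1)%N.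
Proof.
case: w v => [b i] [c j]; rewrite inE /Hadj /= => /or3P[/eqP[_ ->]|/eqP|/eqP] //.
all: rewrite -!/(nat_of_ord _); lia.
Qed.

Lemma Hew_swap (R : realType) (w v : HV K) :
  @Hew R K (Hswap w) (Hswap v) = @Hew R K w v.
Proof. by rewrite /Hew /Hswap /=; case: w.1; case: v.1. Qed.

Lemma Hew_ge0 (R : realType) (w v : HV K) : 0 <= @Hew R K w v.
Proof. by rewrite /Hew; case: ifP. Qed.

End SwapSymmetry.

Section Twins.
Variables (R : realType) (beta : R) (K : nat) (A : MinAggGNN R).
Hypothesis beta_gt0 : 0 < beta.

Local Notation h := (gnn_rep A (@Hadj K) (@Hew R K) (@Hx R K beta)).
Local Notation N := (nbhd (@Hadj K)).

Definition msg l (v w : HV K) :=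
  mlp_eval (gnn_agg A l) (col_mx (h l w) (@Hew R K w v)%:M).

Definition msg_cover l (v : HV K) := forall w, w \in N v ->
  exists2 w', w' \in N (Hswap v) & msg l (Hswap v) w' = msg l v w.

Definition twins_beyond l e :=
  forall w : HV K, (e < w.2)%N -> h l (Hswap w) = h l w.

Lemma gnn_rep_nonneg l (v : HV K) : nonneg_vec (h l v).
Proof.
case: l => [|l]; last exact: mlp_eval_nonneg.
by apply: scalar_cV_nonneg; rewrite /Hx; case: ifP => // _; exact: ltW.
Qed.

Lemma gnn_rep_swap_succ l (v : HV K) : h l (Hswap v) = h l v ->
  msg_cover l v -> msg_cover l (Hswap v) -> h l.+1 (Hswap v) = h l.+1 v.
Proof.
move=> eq_h cover cover_swap; rewrite /= /gnn_layer eq_h.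
congr (mlp_eval _ (col_mx _ _)); apply: cmin_eq_of_cover => // w /cover_swap.
by rewrite HswapK.
Qed.

Lemma msg_cover_far l e (v : HV K) :
  twins_beyond l e -> (e.+1 < v.2)%N -> msg_cover l v.
Proof.
move=> twins far w w_in; exists (Hswap w); first by rewrite Hnbhd_swap.
rewrite /msg Hew_swap twins //; have := Hnbhd_index w_in; lia.
Qed.

Lemma msg_cover_node_indep l (v : HV K) : ~ message_passing A l -> msg_cover l v.
Proof.
move=> indep w w_in; exists (Hswap w); first by rewrite Hnbhd_swap.
rewrite /msg Hew_swap; apply: eq_of_node_indep => //; try exact: gnn_rep_nonneg.
exact/scalar_cV_nonneg/Hew_ge0.
Qed.

Lemma msg_cover_edge_indep l e (v : HV K) :
  ~ depends_on (mlp_eval (gnn_agg A l)) (edge_comp _) ->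
  twins_beyond l e -> (e < v.2)%N -> msg_cover l v.
Proof.
move=> indep twins near w w_in; have [->|w_neq_v] := eqVneq w v.
  by exists (Hswap v); rewrite ?inE ?eqxx // /msg /Hew !eqxx twins.
exists w; first exact: Hnbhd_swapr.
by apply: eq_of_edge_indep => //; try exact: gnn_rep_nonneg;
  exact/scalar_cV_nonneg/Hew_ge0.
Qed.

Lemma twins_beyond_input : twins_beyond 0 0.
Proof.
by case=> b i i_gt0; rewrite /= /Hx /= -!/(nat_of_ord _) (gtn_eqF i_gt0) !andbF.
Qed.

Lemma twins_beyond_succ l e : twins_beyond l e -> twins_beyond l.+1 e.+1.
Proof.
move=> twins w far; apply: gnn_rep_swap_succ; first by apply: twins; lia.
  exact: msg_cover_far twins far.
exact: (msg_cover_far (v := Hswap w) twins far).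
Qed.

Lemma twins_beyond_succ_edge_indep l e : ~ edge_dep_message_passing A l ->
  twins_beyond l e -> twins_beyond l.+1 e.
Proof.
move=> not_edge_dep twins w near.
have cover_at (v : HV K) : v.2 = w.2 -> msg_cover l v.
  move=> eq_idx; have [far|] := ltnP e.+1 v.2.
    exact: msg_cover_far twins far.
  rewrite eq_idx => not_far; have [?|] := not_and_or _ _ not_edge_dep.
    exact: msg_cover_node_indep.
  move=> edge_indep; apply: (msg_cover_edge_indep edge_indep twins).
  by rewrite eq_idx.
by apply: gnn_rep_swap_succ; [exact: twins | exact: cover_at | exact: cover_at].
Qed.

Lemma twins_beyond_edge_dep_count l : (l <= gnn_L A)%N ->
  exists S : {set 'I_(gnn_L A)},
    [/\ forall j, j \in S -> edge_dep_message_passing A j,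
        forall j : 'I_(gnn_L A), j \in S -> (j < l)%N
      & twins_beyond l #|S|].
Proof.
elim: l => [_|l IH lt_lL].
  exists set0; rewrite cards0; split=> [j|j|]; rewrite ?in_set0 //.
  exact: twins_beyond_input.
have [S [S_edge_dep S_lt twins]] := IH (ltnW lt_lL).
case: (classic (edge_dep_message_passing A l)) => [edge_dep|not_edge_dep].
  pose o := Ordinal lt_lL; have o_notin_S : o \notin S.
    by apply/negP => /S_lt; rewrite ltnn.
  exists (o |: S); split.
  - by move=> j; rewrite in_setU1 => /predU1P[->|/S_edge_dep].
  - by move=> j; rewrite in_setU1 => /predU1P[->//|/S_lt]; lia.
  - by rewrite cardsU1 o_notin_S add1n; exact: twins_beyond_succ.
exists S; split => //; first by move=> j /S_lt; lia.
exact: twins_beyond_succ_edge_indep.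
Qed.

End Twins.

Theorem mainTheorem7 (R : realType) (beta : R) (K : nat) (A : MinAggGNN R) :
  0 < beta -> (1 <= K)%N ->
  gnn_rep A (@Hadj K) (@Hew R K) (@Hx R K beta) (gnn_L A) (@Hv K ord_max)
    != gnn_rep A (@Hadj K) (@Hew R K) (@Hx R K beta) (gnn_L A) (@Hu K ord_max) ->
  exists S : {set 'I_(gnn_L A)},
    (K <= #|S|)%N /\ forall l : 'I_(gnn_L A), l \in S -> edge_dep_message_passing A l.
Proof.
move=> beta_gt0 _ /eqP h_neq.
have [S [S_edge_dep _ twins]] :=
  @twins_beyond_edge_dep_count R beta K A beta_gt0 _ (leqnn _).
exists S; split => //; rewrite leqNgt; apply/negP => S_lt_K.
by apply: h_neq; rewrite -(twins (Hv ord_max) S_lt_K).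
Qed.
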